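(* Let $\mathbb{A}$ be a medial algebra over a field of characteristic not $2,3$ and let $\zeta\in\{-1,1\}$. Define on $\mathbb{A}\times\mathbb{A}$ the multiplication $$(x,y)\circ(z,w)=\big(xz+yw,\ \zeta(xw+yz)\big).$$ Then the resulting algebra $(\mathbb{A}\times\mathbb{A})_\zeta$ is medial, and $\mathbb{A}\times 0$ is a medial subalgebra of it isomorphic to $\mathbb{A}$.
   Context: All algebras are commutative, possibly nonassociative, finite-dimensional. Medial: $(xy)(zw)=(xz)(yw)$ identically. *)

(* A (commutative, possibly nonassociative, finite-dimensional)
   algebra over a field F is a finite-dimensional F-vector space V (vectType F)
   with a bilinear commutative product mul : V -> V -> V. *)
From HB Require Import structures.
From mathcomp Require Import all_boot all_order all_algebra.
Set Implicit Arguments. Unset Strict Implicit. Unset Printing Implicit Defensive.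
Import GRing.Theory.
Local Open Scope ring_scope.

Section Defs.
Variables (F : fieldType) (V : vectType F).

Definition bilinear_mul (mul : V -> V -> V) : Prop :=
  (forall (a : F) (x y z : V), mul (a *: x + y) z = a *: mul x z + mul y z) /\
  (forall (a : F) (x y z : V), mul x (a *: y + z) = a *: mul x y + mul x z).

Definition commutative_mul (mul : V -> V -> V) : Prop :=
  forall x y : V, mul x y = mul y x.

Definition is_algebra (mul : V -> V -> V) : Prop :=
  bilinear_mul mul /\ commutative_mul mul.

Definition medial (mul : V -> V -> V) : Prop :=
  forall x y z w : V, mul (mul x y) (mul z w) = mul (mul x z) (mul y w).

Definition subalgebra (mul : V -> V -> V) (S : pred V) : Prop :=
  [/\ 0 \in S,
      (forall (a : F) x y, x \in S -> y \in S -> a *: x + y \in S) &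
      (forall x y, x \in S -> y \in S -> mul x y \in S)].

Definition medial_subalgebra (mul : V -> V -> V) (S : pred V) : Prop :=
  subalgebra mul S /\
  forall x y z w, x \in S -> y \in S -> z \in S -> w \in S ->
    mul (mul x y) (mul z w) = mul (mul x z) (mul y w).
End Defs.

Definition double_mul (F : fieldType) (V : vectType F) (zeta : F)
  (mul : V -> V -> V) (p q : (V * V)%type) : (V * V)%type :=
  (mul p.1 q.1 + mul p.2 q.2, zeta *: (mul p.1 q.2 + mul p.2 q.1)).

Definition alg_iso_to_sub (F : fieldType) (V W : vectType F)
  (mul : V -> V -> V) (mulW : W -> W -> W) (S : pred W) : Prop :=
  exists f : V -> W,
    [/\ linear f, injective f,
        (forall u, u \in S <-> exists x, f x = u) &
        (forall x y, f (mul x y) = mulW (f x) (f y))].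

Definition first_factor (F : fieldType) (V : vectType F) : pred (V * V)%type :=
  fun p => p.2 == 0.

(* Expanding by bilinearity, each side of the medial identity for the doubled
   product becomes a sum of eight monomials of the form (ab)(cd) in the
   coordinates of the four arguments; the mixed monomials carry a factor
   zeta^2 = 1, and one application of mediality in A to each monomial on one
   side turns it into the matching monomial on the other side.  On A x 0 the
   doubled product is (x,0) o (y,0) = (xy, 0), so x |-> (x,0) is an injective
   algebra map onto that subalgebra. *)
From mathcomp Require Import all_boot all_order all_algebra.
Set Implicit Arguments. Unset Strict Implicit. Unset Printing Implicit Defensive.
Import GRing.Theory.
Local Open Scope ring_scope.

Lemma medial_subalgebra_of_medial (F : fieldType) (V : vectType F)
    (mul : V -> V -> V) (S : pred V) :
  medial mul -> subalgebra mul S -> medial_subalgebra mul S.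
Proof. by move=> mulM subS; split=> // x y z w *; apply: mulM. Qed.

Section DoubledProduct.
Variables (F : fieldType) (V : vectType F) (mul : V -> V -> V).
Hypothesis mul_bilinear : bilinear_mul mul.

Lemma bmulDl x y z : mul (x + y) z = mul x z + mul y z.
Proof. by have := mul_bilinear.1 1 x y z; rewrite !scale1r. Qed.

Lemma bmulDr x y z : mul x (y + z) = mul x y + mul x z.
Proof. by have := mul_bilinear.2 1 x y z; rewrite !scale1r. Qed.

Lemma bmul0l x : mul 0 x = 0.
Proof. by apply: (addrI (mul 0 x)); rewrite -bmulDl !addr0. Qed.

Lemma bmul0r x : mul x 0 = 0.
Proof. by apply: (addrI (mul x 0)); rewrite -bmulDr !addr0. Qed.

Lemma bmulZl a x y : mul (a *: x) y = a *: mul x y.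
Proof. by have := mul_bilinear.1 a x 0 y; rewrite !addr0 bmul0l addr0. Qed.

Lemma bmulZr a x y : mul x (a *: y) = a *: mul x y.
Proof. by have := mul_bilinear.2 a x y 0; rewrite !addr0 bmul0r addr0. Qed.

Variable zeta : F.
Local Notation dmul := (double_mul zeta mul).

Lemma double_mul_bilinear : bilinear_mul dmul.
Proof.
have scale_zeta a u v w t :
    zeta *: ((a *: u + v) + (a *: w + t)) =
    a *: (zeta *: (u + w)) + zeta *: (v + t).
  by rewrite addrACA -scalerDr !scalerDr !scalerA mulrC.
split=> a [x1 y1] [x2 y2] [x3 y3]; rewrite /double_mul /=.
- by rewrite !(bmulDl, bmulZl) scale_zeta addrACA -scalerDr.
- by rewrite !(bmulDr, bmulZr) scale_zeta addrACA -scalerDr.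
Qed.

Lemma double_mul_comm : commutative_mul mul -> commutative_mul dmul.
Proof.
move=> mulC [x1 y1] [x2 y2]; rewrite /double_mul /=.
by rewrite (mulC x1) (mulC y1) (mulC x1 y2) (mulC y1 x2) (addrC (mul y2 x1)).
Qed.

Lemma double_mul_medial : zeta ^+ 2 = 1 -> medial mul -> medial dmul.
Proof.
rewrite expr2 => zeta2 mulM [x1 y1] [x2 y2] [x3 y3] [x4 y4].
rewrite /double_mul /=.
rewrite !(bmulDl, bmulDr, bmulZl, bmulZr, scalerA, zeta2, scale1r, scalerDr).
congr (_, _);
  rewrite [in RHS](mulM x1 x3 x2) [in RHS](mulM x1 x3 y2) [in RHS](mulM y1 y3 x2)
    [in RHS](mulM y1 y3 y2) [in RHS](mulM x1 y3 x2) [in RHS](mulM x1 y3 y2)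
    [in RHS](mulM y1 x3 x2) [in RHS](mulM y1 x3 y2);
  by rewrite [LHS](AC ((2*2)*(2*2)) (((1*5)*(8*4))*((2*6)*(7*3)))).
Qed.

Lemma double_mul_first_factor x y : dmul (x, 0) (y, 0) = (mul x y, 0).
Proof. by rewrite /double_mul /= !(bmul0l, bmul0r) !addr0 scaler0. Qed.

Lemma first_factor_subalgebra : subalgebra dmul (@first_factor F V).
Proof.
rewrite /subalgebra /first_factor; split.
- by rewrite unfold_in.
- move=> a [x1 y1] [x2 y2]; rewrite !unfold_in /= => /eqP-> /eqP->.
  by rewrite scaler0 addr0.
- move=> [x1 y1] [x2 y2]; rewrite !unfold_in /= => /eqP-> /eqP->.
  by rewrite !(bmul0l, bmul0r) addr0 scaler0.
Qed.

Lemma alg_iso_first_factor : alg_iso_to_sub mul dmul (@first_factor F V).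
Proof.
exists (fun x => (x, 0)); split.
- by move=> a x y; rewrite -[RHS]/(a *: x + y, a *: 0 + 0) scaler0 addr0.
- by move=> x y [].
- move=> [u1 u2]; rewrite /first_factor unfold_in /=; split.
  + by move/eqP->; exists u1.
  + by case=> x [_ <-].
- by move=> x y; rewrite double_mul_first_factor.
Qed.

End DoubledProduct.

Theorem proposition3p13 (F : fieldType) (V : vectType F) (mul : V -> V -> V)
  (zeta : F) :
  (2%:R : F) != 0 -> (3%:R : F) != 0 ->
  is_algebra mul -> medial mul ->
  (zeta = 1 \/ zeta = -1) ->
  [/\ is_algebra (double_mul zeta mul),
      medial (double_mul zeta mul),
      medial_subalgebra (double_mul zeta mul) (@first_factor F V)
    & alg_iso_to_sub mul (double_mul zeta mul)
        (@first_factor F V)].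
Proof.
move=> _ _ [mul_bilinear mulC] mulM zeta_sign.
have zeta2 : zeta ^+ 2 = 1 by case: zeta_sign => ->; rewrite ?sqrrN expr1n.
have dmulM := double_mul_medial mul_bilinear zeta2 mulM.
split.
- by split; [exact: double_mul_bilinear | exact: double_mul_comm].
- exact: dmulM.
- exact/(medial_subalgebra_of_medial dmulM)/first_factor_subalgebra.
- exact: alg_iso_first_factor.
Qed.
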